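(* Assume the setting and all hypotheses of the following statement: let $M$ be a contextual MDP with finite state space $\mathcal S$, finite action space $\mathcal A$, context space $\mathcal C\subseteq\mathcal S$, discount $\gamma\in(0,1)$, rewards in $[0,1-\gamma]$, with $p_0(s\mid c)=\mathbb 1(s=c)$ and $P,R$ independent of the context; stages $\rho_0,\dots,\rho_K\in\Delta(\mathcal C)$ with $\pi_k^\star\in\arg\max_\pi V^\pi(\rho_k)$, $\pi^\star\in\arg\max_\pi V^\pi(\mathcal U(\mathcal C))$, $d^\star=d^{\pi^\star}$, and the bounded-environment, deterministic-environment and closeness conditions (with constants $D_{\max},p,C_1$) hold, so that there is a problem-dependent constant $m>0$ with $V^{\pi_{k+1}^\star}(\rho_{k+1})-V^{\pi_k^\star}(\rho_{k+1})\le m\,\mathcal W_{d^\star}(\rho_k,\rho_{k+1})$ for subsequent stages. Suppose in addition that the stages are generated by GRADIENT with interpolation factor $\Delta\alpha$, i.e. $\rho_k=\nu_{\min(k\Delta\alpha,1)}$ where $(\nu_\alpha)_{\alpha\in[0,1]}$ is a constant-speed Wasserstein geodesic (with respect to $\mathcal W_{d^\star}$) from the source distribution $\mu=\nu_0$ to the target distribution $\nu=\nu_1$. Then for subsequent stages $k,k+1$, $$V^{\pi_{k+1}^\star}(\rho_{k+1})-V^{\pi_k^\star}(\rho_{k+1})\le m\,\Delta\alpha\,\mathcal W_{d^\star}(\mu,\nu).$$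
   Context: Policies are maps $\mathcal S\to\Delta(\mathcal A)$; $V^\pi(\rho)$ is the expected discounted return starting from $s_0=c$, $c\sim\rho$. $d^\pi$ is the $\pi$-contextual-distance, which here equals the $\pi$-bisimulation metric: the unique fixed point of $\mathcal F(d)(s,t)=|R^\pi_s-R^\pi_t|+\gamma\mathcal W_d(P^\pi_s,P^\pi_t)$ with $R^\pi_s=\sum_a\pi(a\mid s)R(s,a)$, $P^\pi_s=\sum_a\pi(a\mid s)P(\cdot\mid s,a)$. $\mathcal W_d(\mu,\nu)$ is the 1-Wasserstein distance with ground cost $d$. The bounded-environment condition: for each $s$, nonzero values $d^\star(s,s')$ are $\ge1$ and $D_{\max}/2\le\max_{s'}d^\star(s,s')\le D_{\max}$. The deterministic-environment condition: transitions are deterministic and from states in $\mathsf{supp}(\rho_{k+1})\setminus\mathsf{supp}(\rho_k)$, the quantity $\min_{s'\in\mathsf{supp}(\rho_k)}d^\star(s',s_t)$ decreases by 1 with probability $p$ and increases by 1 otherwise. The closeness condition: starting from $t\in\mathsf{supp}(\rho_{k+1})\setminus\mathsf{supp}(\rho_k)$, if the trajectory enters $\mathcal C_{\mathsf s}(\rho_k,\pi_k^\star)=\{s:\sum_t\gamma^t\mathbb P(s_t=s\mid c\sim\rho_k;\pi_k^\star)>0\}$ before reaching a state at maximal $d^\star$-distance from $t$, the hitting point $s$ satisfies $\mathbb E[d^\star(s,t)]\le C_1\min_{s'\in\mathsf{supp}(\rho_k)}d^\star(s',t)$. A constant-speed geodesic satisfies $\mathcal W_{d^\star}(\nu_\alpha,\nu_\beta)=|\alpha-\beta|\,\mathcal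 W_{d^\star}(\mu,\nu)$. *)

From HB Require Import structures.
From mathcomp Require Import all_boot all_order all_algebra.
From mathcomp Require Import all_classical all_reals all_analysis.
Import numFieldNormedType.Exports.
Set Implicit Arguments. Unset Strict Implicit. Unset Printing Implicit Defensive.
Import Order.TTheory GRing.Theory Num.Theory.
Local Open Scope ring_scope.
Local Open Scope classical_set_scope.

Section ContextualMDP.
Variables (R : realType) (S A : finType).

Definition is_dist (T : finType) (mu : T -> R) : Prop :=
  (forall x, 0 <= mu x) /\ \sum_(x : T) mu x = 1.

Definition dist_on (C : {set S}) (mu : S -> R) : Prop :=
  is_dist mu /\ (forall s, s \notin C -> mu s = 0).

Definition is_policy (pi : S -> A -> R) : Prop := forall s, is_dist (pi s).

Definition Rpi (Rw : S -> A -> R) (pi : S -> A -> R) (s : S) : R :=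
  \sum_(a : A) pi s a * Rw s a.
Definition Ppi (P : S -> A -> S -> R) (pi : S -> A -> R) (s : S) : S -> R :=
  fun s' => \sum_(a : A) pi s a * P s a s'.

Fixpoint value_iter (gamma : R) (P : S -> A -> S -> R) (Rw : S -> A -> R)
  (pi : S -> A -> R) (n : nat) (s : S) : R :=
  match n with
  | 0 => 0
  | n'.+1 => Rpi Rw pi s +
      gamma * \sum_(s' : S) Ppi P pi s s' * value_iter gamma P Rw pi n' s'
  end.

Definition value (gamma : R) P Rw pi (s : S) : R :=
  lim ((fun n => value_iter gamma P Rw pi n s) @ \oo).

(* V^pi(rho): start state s_0 = c with c ~ rho  (p_0(s|c) = 1(s = c)) *)
Definition Vrho (gamma : R) P Rw pi (rho : S -> R) : R :=
  \sum_(c : S) rho c * value gamma P Rw pi c.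

Definition is_optimal (gamma : R) P Rw pi (rho : S -> R) : Prop :=
  is_policy pi /\ forall pi', is_policy pi' -> Vrho gamma P Rw pi' rho <= Vrho gamma P Rw pi rho.

Definition is_coupling (q : S -> S -> R) (mu nu : S -> R) : Prop :=
  (forall s t, 0 <= q s t) /\
  (forall s, \sum_(t : S) q s t = mu s) /\
  (forall t, \sum_(s : S) q s t = nu t).

Definition wasserstein (d : S -> S -> R) (mu nu : S -> R) : R :=
  inf [set x : R | exists q, is_coupling q mu nu /\
                   x = \sum_(s : S) \sum_(t : S) q s t * d s t].

Definition is_bisim_metric (gamma : R) P Rw pi (d : S -> S -> R) : Prop :=
  forall s t, 0 <= d s t /\
    d s t = `|Rpi Rw pi s - Rpi Rw pi t|
            + gamma * wasserstein d (Ppi P pi s) (Ppi P pi t).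

Definition uniform_on (C : {set S}) : S -> R :=
  fun s => if s \in C then (#|C|%:R)^-1 else 0.

Definition bounded_env (d : S -> S -> R) (Dmax : R) : Prop :=
  forall s, (forall s', d s s' != 0 -> 1 <= d s s') /\
    Dmax / 2 <= \big[Num.max/0]_(s' : S) d s s' <= Dmax.

End ContextualMDP.

From HB Require Import structures.
From mathcomp Require Import all_boot all_order all_algebra.
From mathcomp Require Import all_classical all_reals all_analysis.
From mathcomp Require Import lra.
Set Implicit Arguments. Unset Strict Implicit. Unset Printing Implicit Defensive.
Import Order.TTheory GRing.Theory Num.Theory.
Local Open Scope ring_scope.

(* Consecutive GRADIENT stages sit at parameters min(k da, 1) and
   min((k+1) da, 1) of the geodesic, which differ by at most da because
   truncation at 1 is 1-Lipschitz; by constant speed their Wasserstein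
   distance is at most da W(mu, nu), and the preceding theorem finishes. *)

Lemma wasserstein_ge0 (R : realType) (S : finType) (d : S -> S -> R)
    (mu nu : S -> R) :
  (forall s t, 0 <= d s t) -> 0 <= wasserstein d mu nu.
Proof.
move=> d_ge0; rewrite /wasserstein; set E := (X in inf X).
have [[x Ex]|E0] := pselect (exists x, E x).
  apply: lb_le_inf; first by exists x.
  move=> _ [q [[q_ge0 _] ->]].
  by apply: sumr_ge0 => s _; apply: sumr_ge0 => t _; apply: mulr_ge0.
suff -> : E = set0 by rewrite inf0.
by apply/seteqP; split => y // Ey; apply: E0; exists y.
Qed.

Lemma bisim_metric_ge0 (R : realType) (S A : finType) (gamma : R)
    (P : S -> A -> S -> R) (Rw : S -> A -> R) (pi : S -> A -> R)
    (d : S -> S -> R) :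
  is_bisim_metric gamma P Rw pi d -> forall s t, 0 <= d s t.
Proof. by move=> bisim s t; case: (bisim s t). Qed.

Lemma dist_min1 (R : realDomainType) (x y : R) :
  `|Num.min x 1 - Num.min y 1| <= `|x - y|.
Proof.
have := ler_norm (x - y); have := ler_norm (y - x); rewrite distrC.
by case: (leP x 1) => ?; case: (leP y 1) => ? ? ?;
  rewrite ler_norml; apply/andP; split; lra.
Qed.

Lemma min1_in01 (R : realDomainType) (x : R) : 0 <= x -> 0 <= Num.min x 1 <= 1.
Proof. by move=> x_ge0; rewrite le_min x_ge0 ler01 ge_min lexx orbT. Qed.

Section ConstantSpeedGeodesic.
Variables (R : realType) (S : finType) (d : S -> S -> R) (nu : R -> S -> R).
Hypothesis constant_speed : forall a b, 0 <= a <= 1 -> 0 <= b <= 1 ->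
  wasserstein d (nu a) (nu b) = `|a - b| * wasserstein d (nu 0) (nu 1).

Lemma wasserstein_gradient_step (da : R) (k : nat) :
  (forall s t, 0 <= d s t) -> 0 <= da ->
  wasserstein d (nu (Num.min (k%:R * da) 1)) (nu (Num.min (k.+1%:R * da) 1))
    <= da * wasserstein d (nu 0) (nu 1).
Proof.
move=> d_ge0 da_ge0.
have kda_ge0 (n : nat) : 0 <= n%:R * da by rewrite mulr_ge0.
rewrite constant_speed ?min1_in01 //.
apply: ler_wpM2r; first exact: wasserstein_ge0.
apply: le_trans (dist_min1 (k%:R * da) (k.+1%:R * da)) _.
by rewrite -natr1 mulrDl mul1r opprD addrA subrr add0r normrN ger0_norm.
Qed.

End ConstantSpeedGeodesic.

Theorem corollary1 (R : realType) (S A : finType)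
  (C : {set S}) (gamma : R) (P : S -> A -> S -> R) (Rw : S -> A -> R)
  (K : nat) (rho : nat -> S -> R) (pis : nat -> S -> A -> R)
  (pistar : S -> A -> R) (dstar : S -> S -> R) (Dmax m da : R)
  (nu : R -> S -> R) :
  C != finset.set0 ->
  0 < gamma < 1 ->
  (forall s a, is_dist (P s a)) ->
  (forall s a, 0 <= Rw s a <= 1 - gamma) ->
  (* deterministic transitions *)
  (forall s a, exists s', P s a s' = 1) ->
  (forall k, (k <= K)%N -> dist_on C (rho k)) ->
  (forall k, (k <= K)%N -> is_optimal gamma P Rw (pis k) (rho k)) ->
  is_optimal gamma P Rw pistar (uniform_on R C) ->
  is_bisim_metric gamma P Rw pistar dstar ->
  bounded_env dstar Dmax ->
  (* the problem-dependent constant m of the preceding theorem *)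
  0 < m ->
  (forall k, (k < K)%N ->
     Vrho gamma P Rw (pis k.+1) (rho k.+1) - Vrho gamma P Rw (pis k) (rho k.+1)
       <= m * wasserstein dstar (rho k) (rho k.+1)) ->
  (* GRADIENT: constant-speed W_{d*}-geodesic from mu = nu 0 to nu 1 *)
  0 < da ->
  (forall a, 0 <= a <= 1 -> dist_on C (nu a)) ->
  (forall a b, 0 <= a <= 1 -> 0 <= b <= 1 ->
     wasserstein dstar (nu a) (nu b) = `|a - b| * wasserstein dstar (nu 0) (nu 1)) ->
  (forall k, (k <= K)%N -> rho k = nu (Num.min (k%:R * da) 1)) ->
  forall k, (k < K)%N ->
    Vrho gamma P Rw (pis k.+1) (rho k.+1) - Vrho gamma P Rw (pis k) (rho k.+1)
      <= m * da * wasserstein dstar (nu 0) (nu 1).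
Proof.
move=> _ _ _ _ _ _ _ _ bisim _ m_gt0 stage_gap da_gt0 _ geodesic gradient k lt_kK.
apply: (le_trans (stage_gap k lt_kK)).
rewrite (gradient k (ltnW lt_kK)) (gradient k.+1 lt_kK) -mulrA ler_pM2l //.
apply: wasserstein_gradient_step => //; last exact: ltW.
exact: bisim_metric_ge0 bisim.
Qed.
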